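(* If $\mathcal{X}$ is infinite, there is no consistent hypothesis test for condition $\mathrm{FS}$: for every sequence of (possibly randomized) decision functions $\hat t_n:\mathcal{X}^n\to\{0,1\}$ there exists a process $\mathbb{X}$ on $\mathcal{X}$ such that $\hat t_n(X_1,\dots,X_n)$ does not converge in probability to $\mathbb{1}_{\mathbb{X}\in\mathrm{FS}}$.
   Context: $\mathrm{FS}$ is the set of stochastic processes $\mathbb{X}=(X_t)_{t\ge1}$ on $\mathcal{X}$ that take only finitely many distinct values almost surely. A hypothesis test is a sequence of possibly random decision functions $\hat t_n$ applied to $(X_1,\dots,X_n)$; it is consistent for a class $\mathcal{C}$ of processes if for every process $\mathbb{X}$, $\hat t_n(X_1,\dots,X_n)\to\mathbb{1}_{\mathbb{X}\in\mathcal{C}}$ in probability. *)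

From HB Require Import structures.
From mathcomp Require Import all_boot all_order all_algebra.
From mathcomp Require Import all_classical all_reals all_analysis.
Set Implicit Arguments. Unset Strict Implicit. Unset Printing Implicit Defensive.
Import Order.TTheory GRing.Theory Num.Theory.
Local Open Scope classical_set_scope.
Local Open Scope ring_scope.

(* A process X = (X_t)_{t>=1} on Xs, defined on a probability space
   (Omega, P); indices are shifted: X t is X_{t+1}. *)

(* The sample (X_1, ..., X_n) as an n-tuple (n.-tuple carries the product
   sigma-algebra in mathcomp-analysis). *)
Definition sample {Omega Xs : Type} (X : nat -> Omega -> Xs) (n : nat)
  (w : Omega) : n.-tuple Xs := [tuple X (nat_of_ord i) w | i < n].

Definition FS {R : realType} {d dX : measure_display}
  {Omega : measurableType d} {Xs : measurableType dX}
  (P : probability Omega R) (X : nat -> Omega -> Xs) : Prop :=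
  {ae P, forall w, finite_set (range (fun t => X t w))}.

(* A (possibly randomized) test: external randomness u drawn from an
   independent probability space (U, Q), and for each n a jointly measurable
   decision function t n : U -> Xs^n -> bool. *)
Definition consistent_on {R : realType} {d dX dU : measure_display}
  {Omega : measurableType d} {Xs : measurableType dX} {U : measurableType dU}
  (Q : probability U R) (t : forall n : nat, U -> n.-tuple Xs -> bool)
  (P : probability Omega R) (X : nat -> Omega -> Xs) : Prop :=
  let c : bool := `[< FS P X >] in
  forall eps : R, 0 < eps ->
    ((fun n => (Q \x P)%E
        [set z : U * Omega | `| (t n z.1 (sample X n z.2))%:R - c%:R | >= eps])
      @ \oo --> 0%E).

From HB Require Import structures.
From mathcomp Require Import all_boot all_order all_algebra.
From mathcomp Require Import all_classical all_reals all_analysis.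
From mathcomp Require Import lra.
Import Order.TTheory GRing.Theory Num.Theory.
Local Open Scope classical_set_scope.
Local Open Scope ring_scope.

(* Suppose a test were consistent, and run it on deterministic sequences.  On a
   finitely-valued sequence it eventually answers "FS" with probability > 1/2.
   Diagonalize: start from a constant sequence, wait until the test answers
   "FS" with probability > 1/2, then switch to a fresh value, and repeat.  The
   limit sequence takes infinitely many values, yet at every switching time the
   test has seen a prefix of a finitely-valued sequence and answers "FS" with
   probability > 1/2, so its error on the limit does not tend to 0. *)

Definition prefix {T : Type} (x : nat -> T) (n : nat) : n.-tuple T :=
  [tuple x i | i < n].

Section diagonal_sequence.
Context {T : Type} (a : nat -> T) (next : (nat -> T) -> nat -> nat).
Hypothesis next_gt : forall x m, (m < next x m)%N.

(* [stage k] is a finitely-valued sequence paired with the cutoff from which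
   on it is constantly [a k]. *)
Fixpoint stage (k : nat) : (nat -> T) * nat :=
  if k is k'.+1 then
    let: (x, m) := stage k' in let n := next x m in
    (fun t => if (t < n)%N then x t else a k, n)
  else (fun _ => a 0%N, 0%N).

Lemma stage_cutoff_lt k : ((stage k).2 < (stage k.+1).2)%N.
Proof. by rewrite /=; case: (stage k). Qed.

Lemma stage_cutoff_ge k : (k <= (stage k).2)%N.
Proof. by elim: k => // k IH; apply: leq_ltn_trans IH (stage_cutoff_lt k). Qed.

Lemma stage_cutoff_homo : {homo (fun k => (stage k).2) : i j / (i <= j)%N}.
Proof.
by apply: homo_leq => [//|y x z|k]; [exact: leq_trans|exact: ltnW (stage_cutoff_lt k)].
Qed.

Lemma stage_below_cutoff k t :
  (t < (stage k.+1).2)%N -> (stage k.+1).1 t = (stage k).1 t.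
Proof. by rewrite /=; case: (stage k) => x m /= ->. Qed.

Lemma stage_stable i j t : (i <= j)%N -> (t < (stage i).2)%N ->
  (stage j).1 t = (stage i).1 t.
Proof.
move=> /subnK <-; elim: (j - i)%N => // k IH ti; rewrite addSn stage_below_cutoff ?IH //.
apply: leq_trans ti (ltnW (leq_ltn_trans _ (stage_cutoff_lt _))).
exact: stage_cutoff_homo (leq_addl _ _).
Qed.

Definition diag (t : nat) : T := (stage t.+1).1 t.

Lemma diagE k t : (t < (stage k).2)%N -> diag t = (stage k).1 t.
Proof.
move=> tk; rewrite /diag; have [kt|tk'] := leqP k t.+1; first exact: stage_stable.
symmetry; apply: stage_stable (ltnW tk') _.
exact: leq_trans (stage_cutoff_ge t.+1).
Qed.

Lemma stage_at_cutoff k : (stage k).1 (stage k).2 = a k.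
Proof. by case: k => [|k] //=; case: (stage k) => x m /=; rewrite ltnn. Qed.

Lemma diag_at_cutoff k : diag (stage k).2 = a k.
Proof.
have lt_cut := stage_cutoff_lt k.
by rewrite (diagE _ _ lt_cut) stage_below_cutoff // stage_at_cutoff.
Qed.

Lemma prefix_diag k :
  prefix diag (stage k.+1).2 = prefix (stage k).1 (stage k.+1).2.
Proof.
apply: eq_mktuple => i; rewrite (diagE _ _ (ltn_ord i)).
exact: stage_below_cutoff (ltn_ord i).
Qed.

Lemma stage_range_finite k : finite_set (range (stage k).1).
Proof.
suff sub : range (stage k).1 `<=` a @` `I_k.+1.
  exact: sub_finite_set sub (finite_image _ (finite_II _)).
elim: k => [|k IH] _ [t _ <-]; first by exists 0%N.
move: IH; rewrite /=; case: (stage k) => x m /= IH.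
case: ifP => _; last by exists k.+1.
have [i ik <-] := IH _ (ex_intro2 _ _ t I erefl).
by exists i => //; apply: ltnW.
Qed.

Lemma diag_range_infinite : injective a -> infinite_set (range diag).
Proof.
move=> a_inj diag_fin; apply: infinite_nat.
have -> : [set: nat] = a @^-1` range diag.
  by apply/seteqP; split => // k _; exists (stage k).2; rewrite ?diag_at_cutoff.
by apply: finite_preimage diag_fin => i j _ _; apply: a_inj.
Qed.

End diagonal_sequence.

Lemma recurrent_on_infinite_range (T : Type) (G : forall n, n.-tuple T -> Prop)
    (a : nat -> T) : injective a ->
  (forall x : nat -> T, finite_set (range x) ->
     forall m, exists2 n, (m < n)%N & G n (prefix x n)) ->
  exists2 y : nat -> T, infinite_set (range y) &
    forall m, exists2 n, (m <= n)%N & G n (prefix y n).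
Proof.
move=> a_inj recurrent.
pose next x m := xget m.+1 [set n | (m < n)%N /\ G n (prefix x n)].
have next_gt x m : (m < next x m)%N.
  by rewrite /next; case: xgetP => [n _ []|].
exists (diag a next).
  exact: diag_range_infinite.
move=> m; exists (stage a next m.+1).2.
  exact: leq_trans (leqnSn m) (stage_cutoff_ge _ _ next_gt _).
rewrite prefix_diag //=; case: (stage a next m) (stage_range_finite a next m) => x k /= fin.
rewrite /next; case: xgetP => [n _ []//|none]; exfalso.
by have [n kn Gn] := recurrent x fin k; apply: (none n).
Qed.

Lemma FS_const {R : realType} {d dX : measure_display} {Omega : measurableType d}
    {Xs : measurableType dX} (P : probability Omega R) (x : nat -> Xs) :
  FS P (fun i _ => x i) <-> finite_set (range x).
Proof.
split=> [[A [_ A0 sub]]|fin]; last exact: aeW.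
apply: contrapT => inf; move: A0.
have -> : A = setT by apply/seteqP; split => // w _; exact: sub.
by rewrite probability_setT => /eqP; rewrite onee_eq0.
Qed.

Section test_error.
Context {R : realType} {dX : measure_display} {Xs : measurableType dX}
  {dU : measure_display} {U : measurableType dU} (Q : probability U R)
  (t : forall n : nat, U -> n.-tuple Xs -> bool).
Hypothesis t_meas : forall n : nat,
  measurable_fun [set: U * n.-tuple Xs] (fun z => t n z.1 z.2).

Definition test_error n (s : n.-tuple Xs) (c : bool) : \bar R :=
  Q [set u | t n u s != c].

Lemma measurable_test_neq n s c : measurable [set u | t n u s != c].
Proof.
have meas_t : measurable_fun setT (fun u => t n u s).
  exact: measurableT_comp (t_meas n) (pair2_measurable s).
by rewrite -[X in measurable X]setTI; apply: (meas_t measurableT [set b | b != c]).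
Qed.

Lemma test_errorC n s : (test_error n s true + test_error n s false = 1)%E.
Proof.
have disjoint : [set u | t n u s != true] `&` [set u | t n u s != false] = set0.
  by apply/seteqP; split => u //= []; case: (t n u s).
rewrite /test_error -measureU //; try exact: measurable_test_neq.
rewrite -(probability_setT Q); congr (Q _).
by apply/seteqP; split => u //= _; case: (t n u s); [right|left].
Qed.

Lemma product_deviation_test_error d (Omega : measurableType d)
    (P : probability Omega R) (eps : R) n s (c : bool) :
  0 < eps -> eps <= 1 ->
  (Q \x P)%E [set z : U * Omega | eps <= `|(t n z.1 s)%:R - c%:R| ]
  = test_error n s c.
Proof.
move=> eps_gt0 eps_le1.
have -> : [set z : U * Omega | eps <= `|(t n z.1 s)%:R - c%:R| ] =
    [set u | t n u s != c] `*` setT.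
  apply/seteqP; split => z /=;
    case: (t n z.1 s); case: c => //=; rewrite ?subrr ?normr0 ?subr0 ?sub0r ?normrN ?normr1;
    (move=> h; split => //; move: h; lra) || by move=> [].
rewrite product_measure1E //; last exact: measurable_test_neq.
by rewrite -[RHS]mule1; congr (_ * _)%E; exact: probability_setT.
Qed.

Lemma consistent_const_test_error {d} {Omega : measurableType d}
    {P : probability Omega R} {x : nat -> Xs} :
  consistent_on Q t P (fun i _ => x i) ->
  \forall n \near \oo,
    (test_error n (prefix x n) `[< finite_set (range x) >] < (1/2 : R)%:E)%E.
Proof.
have half_gt0 : (0 : R) < 1/2 by lra.
have half_le1 : (1/2 : R) <= 1 by lra.
move=> /(_ (1/2) half_gt0).
rewrite (asbool_equiv_eq (FS_const P x)).
under eq_fun do rewrite product_deviation_test_error //.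
move=> /(@fine_cvgP _ _ _ _ _ 0) [[N1 _ fin] /cvgr_lt /(_ _ half_gt0)].
move=> [N2 _ small]; exists (maxn N1 N2) => // n /= n_ge.
rewrite -(fineK (fin n _)) ?lte_fin ?small //=.
- exact: leq_trans (leq_maxr _ _) n_ge.
- exact: leq_trans (leq_maxl _ _) n_ge.
Qed.

End test_error.

Theorem proposition4 (R : realType) (dX : measure_display) (Xs : measurableType dX)
  (Xs_infinite : infinite_set [set: Xs])
  (dU : measure_display) (U : measurableType dU) (Q : probability U R)
  (t : forall n : nat, U -> n.-tuple Xs -> bool)
  (t_meas : forall n : nat,
      measurable_fun [set: U * n.-tuple Xs] (fun z => t n z.1 z.2)) :
  exists (d : measure_display) (Omega : measurableType d)
         (P : probability Omega R) (X : nat -> Omega -> Xs),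
    (forall i : nat, measurable_fun [set: Omega] (X i)) /\
    ~ consistent_on Q t P X.
Proof.
apply: contrapT => no_counterexample.
have consistent x : consistent_on Q t Q (fun i _ => x i).
  apply: contrapT => inconsistent; apply: no_counterexample.
  by exists dU, U, Q, (fun i _ => x i); split=> // i; exact: measurable_cst.
pose accepts n s := (test_error Q t n s true < (1/2 : R)%:E)%E.
have [y y_inf y_accepted] : exists2 y : nat -> Xs, infinite_set (range y) &
    forall m, exists2 n, (m <= n)%N & accepts n (prefix y n).
  have /infiniteP/pcard_injP[a a_inj] := Xs_infinite.
  apply: (@recurrent_on_infinite_range _ accepts a) => [i j|x x_fin m].
    by apply: a_inj; rewrite inE.
  have [N _ accepted] := consistent_const_test_error _ _ t_meas (consistent x).
  exists (maxn N m.+1); first by rewrite leq_max ltnSn orbT.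
  by have := accepted _ (leq_maxl N m.+1); rewrite asboolT.
have [N _ rejects] := consistent_const_test_error _ _ t_meas (consistent y).
have [n Nn accepted] := y_accepted N.
have := lteD accepted (rejects n Nn).
rewrite asboolF // (test_errorC _ _ t_meas) -EFinD.
have -> : (1/2 + 1/2 : R) = 1 by lra.
by rewrite ltxx.
Qed.
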